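(* Let $n,r\ge 1$ be integers. If $G(n,r)$ has a vertex $v$ all of whose positive entries equal $1$, then the maximum degree of $G(n,r)$ satisfies $\Delta(G(n,r))=d(v)=\frac{nr(nr-2r+1)}{2}$.
   Context: For integers $n,r\ge 1$, $G(n,r)$ is the simple undirected graph whose vertices are the $n\times n$ matrices with non-negative integer entries all of whose row sums and column sums equal $r$. Let $e_{ij}$ be the $n\times n$ matrix with a $1$ in position $(i,j)$ and $0$ elsewhere, and let $\mathcal{B}=\{\pm(e_{ij}+e_{kl}-e_{il}-e_{kj}) : 1\le i<k\le n,\ 1\le j<l\le n\}$. Two vertices $u,v$ are adjacent iff $u-v\in\mathcal{B}$. $d(v)$ denotes the degree of $v$ and $\Delta(G)$ the maximum degree of $G$. *)

From HB Require Import structures.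
From mathcomp Require Import all_boot all_order all_algebra.
Unset Printing Implicit Defensive.
Import Order.TTheory GRing.Theory Num.Theory.

Definition is_vertex (n r : nat) (A : 'M[nat]_n) : bool :=
  [forall i : 'I_n, \sum_(j < n) A i j == r] &&
  [forall j : 'I_n, \sum_(i < n) A i j == r].

Definition e (n : nat) (i j : 'I_n) : 'M[int]_n := delta_mx i j.

Definition inB (n : nat) (M : 'M[int]_n) : bool :=
  [exists i : 'I_n, exists k : 'I_n, exists j : 'I_n, exists l : 'I_n,
     [&& (i < k)%N, (j < l)%N &
        let b := (@e n i j + @e n k l - @e n i l - @e n k j)%R in
        (M == b) || (M == (- b)%R)]].

Definition toZ (n : nat) (A : 'M[nat]_n) : 'M[int]_n := map_mx Posz A.

Definition adj (n : nat) (u v : 'M[nat]_n) : bool :=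
  @inB n (@toZ n u - @toZ n v)%R.

(* Every vertex of G(n,r) has entries <= r, so the vertex set is faithfully
   enumerated by the finite type of matrices with entries in 'I_r.+1. *)
Definition emb (n r : nat) (A : 'M['I_r.+1]_n) : 'M[nat]_n :=
  map_mx (@nat_of_ord r.+1) A.

Definition deg (n r : nat) (v : 'M[nat]_n) : nat :=
  #|[set u : 'M['I_r.+1]_n | is_vertex n r (@emb n r u) && @adj n (@emb n r u) v]|.

Definition maxdeg (n r : nat) : nat :=
  \max_(u : 'M['I_r.+1]_n | is_vertex n r (@emb n r u)) deg n r (@emb n r u).

From HB Require Import structures.
From mathcomp Require Import all_boot all_order all_algebra.
From mathcomp Require Import zify ring lra.
Import Order.TTheory GRing.Theory Num.Theory.

(* Adjacency in G(n,r) is described by "swaps": given two cells x, y of a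
   vertex w lying in distinct rows and distinct columns and carrying positive
   entries, remove one unit from x and from y and add one unit to the crossed
   cells (x.1, y.2) and (y.1, x.2).  Every neighbour of w arises from exactly
   one unordered such pair, so d(w) counts the unordered pairs of cells of the
   support S of w lying in distinct rows and distinct columns.  By
   inclusion-exclusion,
       2 d(w) = |S|^2 - sum_a p_a^2 - sum_b q_b^2 + |S|,
   where p_a (resp. q_b) is the number of cells of S in row a (column b).
   Since all line sums of w equal r, p_a <= r, hence |S| <= nr, and the
   Cauchy-Schwarz inequality gives n sum_a p_a^2 >= |S|^2, likewise for the
   columns; this bounds 2 d(w) by nr(nr - 2r + 1) when n >= 2 (for n = 1 no
   such pair of cells exists).  For a 0/1 vertex, p_a = q_b = r and |S| = nr,
   so the bound is attained. *)

Set Implicit Arguments.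
Unset Strict Implicit.
Local Open Scope ring_scope.

Lemma sqr_sum_le (R : realDomainType) (I : finType) (F : I -> R) :
  (\sum_i F i) ^+ 2 <= #|I|%:R * \sum_i F i ^+ 2.
Proof.
have spread : 0 <= \sum_i \sum_j (F i - F j) ^+ 2.
  by apply: sumr_ge0 => i _; apply: sumr_ge0 => j _; apply: sqr_ge0.
have square : (\sum_i F i) ^+ 2 = \sum_i \sum_j F i * F j.
  by rewrite expr2 mulr_suml; apply: eq_bigr => i _; rewrite mulr_sumr.
have expand : \sum_i \sum_j (F i - F j) ^+ 2 =
    \sum_i \sum_(j : I) F i ^+ 2 + \sum_(i : I) \sum_j F j ^+ 2
    - 2 * \sum_i \sum_j F i * F j.
  rewrite mulr_sumr -big_split -sumrB; apply: eq_bigr => i _.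
  rewrite mulr_sumr -big_split -sumrB; apply: eq_bigr => j _.
  by simpl; ring.
have const_row : \sum_i \sum_(j : I) F i ^+ 2 = #|I|%:R * \sum_i F i ^+ 2.
  by rewrite mulr_sumr; apply: eq_bigr => i _; rewrite sumr_const mulr_natl.
have const_col : \sum_(i : I) \sum_j F j ^+ 2 = #|I|%:R * \sum_i F i ^+ 2.
  by rewrite sumr_const mulr_natl.
rewrite expand -square const_row const_col in spread.
lra.
Qed.

(* The arithmetic core of the degree bound: if P is the size of a support,
   S2 and S3 the sums of its squared row and column counts, and n >= 2, then
   P <= nr and the Cauchy-Schwarz bounds P^2 <= n S2, P^2 <= n S3 bound the
   count of ordered cross pairs by nr(nr - 2r + 1). *)
Lemma cross_count_bound (R : realDomainType) (n r P S2 S3 : R) :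
  2 <= n -> 0 <= P -> P <= n * r -> P ^+ 2 <= n * S2 -> P ^+ 2 <= n * S3 ->
  P ^+ 2 - S2 - S3 + P <= n * r * (n * r - 2 * r + 1).
Proof.
move=> n2 P0 PN h2 h3.
have n0 : 0 < n by apply: lt_le_trans n2.
rewrite -(ler_pM2l n0).
have gap : n * (n * r * (n * r - 2 * r + 1)) - n * (P ^+ 2 - S2 - S3 + P) =
  (n - 2) * ((n * r - P) * (n * r + P)) + n * (n * r - P)
  + (n * S2 - P ^+ 2) + (n * S3 - P ^+ 2) by ring.
rewrite -subr_ge0 gap.
have t1 : 0 <= (n - 2) * ((n * r - P) * (n * r + P)).
  by rewrite !mulr_ge0 ?subr_ge0 //; lra.
have t2 : 0 <= n * (n * r - P) by rewrite mulr_ge0 ?subr_ge0 //; lra.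
lra.
Qed.

Section CellPairs.
Variables (I J : finType) (S : {set I * J}).

Definition row_cells (a : I) : {set I * J} := [set x in S | x.1 == a].
Definition col_cells (b : J) : {set I * J} := [set x in S | x.2 == b].

Definition cross_pairs : {set (I * J) * (I * J)} :=
  [set q in setX S S | (q.1.1 != q.2.1) && (q.1.2 != q.2.2)].

Definition cross_cells (x : I * J) : {set I * J} :=
  [set y in S | (x.1 != y.1) && (x.2 != y.2)].

Lemma card_row_cells a : #|row_cells a| = (\sum_b ((a, b) \in S))%N.
Proof.
have -> : row_cells a = pair a @: [set b | (a, b) \in S].
  apply/setP => -[a' b]; rewrite !inE; apply/andP/imsetP => [[Sab /eqP /= <-] | [b']].
    by exists b; rewrite ?inE.
  by rewrite inE => Sab [-> ->].
by rewrite card_imset; [rewrite -sum1dep_card big_mkcond | move=> b b' []].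
Qed.

Lemma card_col_cells b : #|col_cells b| = (\sum_a ((a, b) \in S))%N.
Proof.
have -> : col_cells b = (pair^~ b) @: [set a | (a, b) \in S].
  apply/setP => -[a b']; rewrite !inE; apply/andP/imsetP => [[Sab /eqP /= <-] | [a']].
    by exists a; rewrite ?inE.
  by rewrite inE => Sab [-> ->].
by rewrite card_imset; [rewrite -sum1dep_card big_mkcond | move=> a a' []].
Qed.

Lemma card_by_rows : #|S| = (\sum_a #|row_cells a|)%N.
Proof.
rewrite -sum1_card (partition_big fst xpredT) //=; apply: eq_bigr => a _.
by rewrite -sum1_card; apply: eq_bigl => x; rewrite inE.
Qed.

Lemma card_by_cols : #|S| = (\sum_b #|col_cells b|)%N.
Proof.
rewrite -sum1_card (partition_big snd xpredT) //=; apply: eq_bigr => b _.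
by rewrite -sum1_card; apply: eq_bigl => x; rewrite inE.
Qed.

(* Inclusion-exclusion: removing the row and the column of x from S removes
   p + q - 1 cells, x being the only cell in both. *)
Lemma card_cross_cells x : x \in S ->
  #|cross_cells x|%:R = #|S|%:R - #|row_cells x.1|%:R - #|col_cells x.2|%:R + 1 :> int.
Proof.
move=> Sx.
have corner : row_cells x.1 :&: col_cells x.2 = [set x].
  case: x Sx => x1 x2 Sx; apply/setP => -[a b]; rewrite !inE xpair_eqE /=.
  by case: eqP => [->|]; case: eqP => [->|]; rewrite ?Sx ?andbF.
have line_sub : row_cells x.1 :|: col_cells x.2 \subset S.
  by apply/subsetP => y; rewrite !inE => /orP [] /andP [].
have outside : cross_cells x = S :\: (row_cells x.1 :|: col_cells x.2).
  apply/setP => y; rewrite !inE [x.1 == _]eq_sym [x.2 == _]eq_sym.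
  by case: (y \in S); rewrite ?andbF //= negb_or andbT.
have split_S := cardsID (row_cells x.1 :|: col_cells x.2) S.
have union := cardsUI (row_cells x.1) (col_cells x.2).
rewrite corner cards1 (setIidPr line_sub) -outside in split_S union.
rewrite !natz; lia.
Qed.

Lemma card_cross_pairs_sum :
  #|cross_pairs| = (\sum_(x in S) #|cross_cells x|)%N.
Proof.
under eq_bigr do rewrite -sum1_card.
rewrite pair_big_dep -sum1_card; apply: eq_bigl => -[x y].
by rewrite !inE /= -andbA.
Qed.

Lemma sum_over_rows (F : I -> int) :
  \sum_(x in S) F x.1 = \sum_a #|row_cells a|%:R * F a.
Proof.
rewrite (partition_big (fun x : I * J => x.1) xpredT) //=.
apply: eq_bigr => a _; rewrite -sum1_card natr_sum mulr_suml.
by apply: eq_big => [x|x /andP [_ /eqP ->]]; rewrite ?mul1r // inE.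
Qed.

Lemma sum_over_cols (F : J -> int) :
  \sum_(x in S) F x.2 = \sum_b #|col_cells b|%:R * F b.
Proof.
rewrite (partition_big (fun x : I * J => x.2) xpredT) //=.
apply: eq_bigr => b _; rewrite -sum1_card natr_sum mulr_suml.
by apply: eq_big => [x|x /andP [_ /eqP ->]]; rewrite ?mul1r // inE.
Qed.

Lemma card_cross_pairs :
  #|cross_pairs|%:R = #|S|%:R ^+ 2 - \sum_a #|row_cells a|%:R ^+ 2
                      - \sum_b #|col_cells b|%:R ^+ 2 + #|S|%:R :> int.
Proof.
rewrite card_cross_pairs_sum natr_sum (eq_bigr _ card_cross_cells).
rewrite big_split !sumrB /= (sum_over_rows (fun a => #|row_cells a|%:R)).
rewrite (sum_over_cols (fun b => #|col_cells b|%:R)) !sumr_const.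
by congr (_ - _ - _ + _); rewrite expr2 mulr_natr.
Qed.

End CellPairs.

Section Moves.
Variables (m : nat) (J : finType) (S : {set 'I_m * J}).

(* Unordered cross pairs of S, as ordered pairs with increasing rows. *)
Definition moves : {set ('I_m * J) * ('I_m * J)} :=
  [set q in setX S S | (q.1.1 < q.2.1)%N && (q.1.2 != q.2.2)].

(* Each unordered cross pair has exactly two orderings. *)
Lemma card_cross_pairs_moves : #|cross_pairs S| = (2 * #|moves|)%N.
Proof.
pose flip (q : ('I_m * J) * ('I_m * J)) := (q.2, q.1).
have flipK : involutive flip by case.
pose upward := [set q : ('I_m * J) * ('I_m * J) | (q.1.1 < q.2.1)%N].
have up : cross_pairs S :&: upward = moves.
  apply/setP => -[[a b] [a' b']]; rewrite !inE /=.
  by case: (ltngtP a a') => h; rewrite ?andbF ?andbT //= neq_ltn h.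
have down : cross_pairs S :\: upward = flip @^-1: moves.
  apply/setP => -[[a b] [a' b']]; rewrite !inE /= [b' == b]eq_sym.
  case: (ltngtP a a') => [_|lt|/val_inj ->]; rewrite ?eqxx ?andbF //=.
  by rewrite neq_ltn lt orbT /= [X in X && _ = _]andbC.
rewrite -(cardsID upward) up down card_preimset ?mul2n ?addnn //.
exact: inv_inj.
Qed.

Lemma moves_single_row : (m <= 1)%N -> moves = set0.
Proof.
move=> m1; apply/setP => -[[a b] [a' b']]; rewrite !inE /=.
apply/negbTE/and3P => -[_ lt _]; have := ltn_ord a'; lia.
Qed.

End Moves.

Lemma sum_indicator_row (T : eqType) (J : finType) (a i : T) (j : J) :
  \sum_(b : J) ((a == i) && (b == j))%:R = (a == i)%:R :> int.
Proof.
rewrite (bigD1 j) //= eqxx andbT big1 ?addr0 // => b /negbTE nb.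
by rewrite nb andbF.
Qed.

Lemma sum_indicator_col (I : finType) (T : eqType) (i : I) (b j : T) :
  \sum_(a : I) ((a == i) && (b == j))%:R = (b == j)%:R :> int.
Proof.
rewrite (bigD1 i) //= eqxx big1 ?addr0 // => a /negbTE na.
by rewrite na.
Qed.

Section Swaps.
Variable n : nat.
Implicit Types (x y : 'I_n * 'I_n) (u w : 'M[nat]_n).

Definition swap_mx x y : 'M[int]_n :=
  e n x.1 y.2 + e n y.1 x.2 - e n x.1 x.2 - e n y.1 y.2.

Lemma swap_mxE x y a b :
  swap_mx x y a b = ((a == x.1) && (b == y.2))%:R + ((a == y.1) && (b == x.2))%:R
                  - ((a == x.1) && (b == x.2))%:R - ((a == y.1) && (b == y.2))%:R.
Proof. by rewrite !mxE. Qed.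

Lemma swap_mx_src x y : x.1 != y.1 -> x.2 != y.2 ->
  swap_mx x y x.1 x.2 = -1 /\ swap_mx x y y.1 y.2 = -1.
Proof.
move=> /negbTE ne1 /negbTE ne2.
rewrite !swap_mxE !eqxx ne1 ne2 [y.1 == _]eq_sym [y.2 == _]eq_sym ne1 ne2 /=.
split; lia.
Qed.

Lemma swap_mx_neg x y a b : swap_mx x y a b < 0 -> (a, b) = x \/ (a, b) = y.
Proof.
rewrite swap_mxE; case: x y => [x1 x2] [y1 y2] /=.
have [-> | nx] := eqVneq (a, b) (x1, x2); first by left.
have [-> | ny] := eqVneq (a, b) (y1, y2); first by right.
move: nx ny; rewrite !xpair_eqE => /negbTE -> /negbTE ->.
by case: (_ && _); case: (_ && _); rewrite /=; lia.
Qed.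

Lemma swap_mx_inj x y x' y' :
  (x.1 < y.1)%N -> x.2 != y.2 -> (x'.1 < y'.1)%N -> x'.2 != y'.2 ->
  swap_mx x y = swap_mx x' y' -> x = x' /\ y = y'.
Proof.
move=> lt ne2 lt' ne2' eq_swap.
have ne1 : x.1 != y.1 by rewrite neq_ltn lt.
have [at_x at_y] := swap_mx_src ne1 ne2; rewrite eq_swap in at_x at_y.
have /swap_mx_neg sx : swap_mx x' y' x.1 x.2 < 0 by rewrite at_x.
have /swap_mx_neg sy : swap_mx x' y' y.1 y.2 < 0 by rewrite at_y.
rewrite -!surjective_pairing in sx sy.
move: lt lt'; case: sx sy => -> [] -> //; rewrite ?ltnn //; lia.
Qed.

Lemma swap_mx_row_sum x y a : \sum_b swap_mx x y a b = 0.
Proof.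
under eq_bigr do rewrite swap_mxE.
by rewrite !sumrB big_split /= !sum_indicator_row; lia.
Qed.

Lemma swap_mx_col_sum x y b : \sum_a swap_mx x y a b = 0.
Proof.
under eq_bigr do rewrite swap_mxE.
by rewrite !sumrB big_split /= !sum_indicator_col; lia.
Qed.

Lemma swap_mx_flip (i k j l : 'I_n) :
  - swap_mx (i, l) (k, j) = swap_mx (i, j) (k, l).
Proof. by apply/matrixP => a b; rewrite !mxE /=; lia. Qed.

Lemma inB_swap (M : 'M[int]_n) : inB n M =
  [exists x : 'I_n * 'I_n, exists y : 'I_n * 'I_n,
     [&& (x.1 < y.1)%N, x.2 != y.2 & M == swap_mx x y]].
Proof.
apply/idP/idP.
  case/existsP => i /existsP [k /existsP [j /existsP [l]]].
  case/and3P => ik jl /orP [] /eqP ->.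
    apply/existsP; exists (i, l); apply/existsP; exists (k, j).
    by rewrite ik eqxx andbT neq_ltn jl orbT.
  apply/existsP; exists (i, j); apply/existsP; exists (k, l).
  by rewrite ik neq_ltn jl -swap_mx_flip /=; apply/eqP.
case/existsP => -[x1 x2] /existsP [[y1 y2] /and3P [/= lt ne /eqP ->]].
apply/existsP; exists x1; apply/existsP; exists y1.
case: (ltngtP x2 y2) => [lt2 | gt2 | /val_inj eq2]; last by rewrite eq2 eqxx in ne.
  apply/existsP; exists x2; apply/existsP; exists y2.
  by rewrite lt lt2 -swap_mx_flip /=; apply/orP; right.
apply/existsP; exists y2; apply/existsP; exists x2.
by rewrite lt gt2 /=; apply/orP; left.
Qed.

Definition supp w : {set 'I_n * 'I_n} := [set x | (0 < w x.1 x.2)%N].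

Definition shift w (q : ('I_n * 'I_n) * ('I_n * 'I_n)) : 'M[nat]_n :=
  map_mx absz (toZ n w + swap_mx q.1 q.2).

Lemma toZ_inj : injective (toZ n).
Proof.
by move=> A B /matrixP eqAB; apply/matrixP => a b; have := eqAB a b; rewrite !mxE => -[].
Qed.

(* A swap whose sources lie in the support keeps all entries nonnegative, so
   shifting is exact. *)
Lemma toZ_shift w q : q \in moves (supp w) ->
  toZ n (shift w q) = toZ n w + swap_mx q.1 q.2.
Proof.
case: q => -[x1 x2] [y1 y2]; rewrite !inE /= => /andP [/andP [px py] /andP [lt ne2]].
have ne1 : x1 != y1 by rewrite neq_ltn lt.
have /= [sx sy] := swap_mx_src (x := (x1, x2)) (y := (y1, y2)) ne1 ne2.
apply/matrixP => a b; rewrite [LHS]mxE mxE; apply: gez0_abs.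
rewrite [X in 0 <= X]mxE [toZ n w a b]mxE.
have [/swap_mx_neg [] [-> ->] | nonneg] := ltP (swap_mx (x1, x2) (y1, y2) a b) 0.
- by rewrite sx; move: px; lia.
- by rewrite sy; move: py; lia.
- exact: addr_ge0.
Qed.

Lemma adjP u w :
  reflect (exists2 q, q \in moves (supp w) & u = shift w q) (adj n u w).
Proof.
apply: (iffP idP) => [|[q mv ->]]; last first.
  rewrite /adj toZ_shift // addrC addKr inB_swap.
  move: mv; rewrite inE => /andP [_ /andP [lt ne2]].
  by apply/existsP; exists q.1; apply/existsP; exists q.2; rewrite lt ne2 eqxx.
rewrite /adj inB_swap => /existsP [x /existsP [y /and3P [lt ne2 /eqP diff]]].
have uE : toZ n u = toZ n w + swap_mx x y by rewrite -diff addrC subrK.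
have ne1 : x.1 != y.1 by rewrite neq_ltn lt.
have [sx sy] := swap_mx_src ne1 ne2.
have supp_src c : swap_mx x y c.1 c.2 = -1 -> c \in supp w.
  move=> sc; have /matrixP/(_ c.1 c.2) := uE.
  rewrite [LHS]mxE [RHS]mxE [toZ n w _ _]mxE sc inE /=; lia.
have mv : (x, y) \in moves (supp w).
  by rewrite inE in_setX /= lt ne2 !supp_src.
by exists (x, y) => //; apply: toZ_inj; rewrite toZ_shift.
Qed.

Lemma toZ_row_sum (A : 'M[nat]_n) a : (\sum_b A a b)%N%:Z = \sum_b toZ n A a b.
Proof. by rewrite -natz natr_sum; apply: eq_bigr => b _; rewrite mxE natz. Qed.

Lemma toZ_col_sum (A : 'M[nat]_n) b : (\sum_a A a b)%N%:Z = \sum_a toZ n A a b.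
Proof. by rewrite -natz natr_sum; apply: eq_bigr => a _; rewrite mxE natz. Qed.

Lemma shift_vertex r w q : is_vertex n r w -> q \in moves (supp w) ->
  is_vertex n r (shift w q).
Proof.
case/andP => /forallP rows /forallP cols mv.
apply/andP; split; apply/forallP => c; rewrite -eqz_nat.
  rewrite toZ_row_sum toZ_shift //; under eq_bigr do rewrite mxE.
  by rewrite big_split /= swap_mx_row_sum addr0 -toZ_row_sum eqz_nat.
rewrite toZ_col_sum toZ_shift //; under eq_bigr do rewrite mxE.
by rewrite big_split /= swap_mx_col_sum addr0 -toZ_col_sum eqz_nat.
Qed.

End Swaps.

Section Degree.
Variables n r : nat.
Implicit Types (w : 'M[nat]_n).

Lemma vertex_entry_le w a b : is_vertex n r w -> (w a b <= r)%N.
Proof. by case/andP => /forallP /(_ a) /eqP <- _; rewrite (bigD1 b) //= leq_addr. Qed.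

(* Vertices have entries at most r, hence are represented in the finite type
   of matrices over 'I_r.+1 on which deg and maxdeg are computed. *)
Definition lift_mx w : 'M['I_r.+1]_n := map_mx inord w.

Lemma emb_lift w : is_vertex n r w -> emb n r (lift_mx w) = w.
Proof.
by move=> vw; apply/matrixP => a b; rewrite !mxE inordK // ltnS vertex_entry_le.
Qed.

Lemma emb_inj : injective (emb n r).
Proof.
move=> u u' /matrixP eq_emb; apply/matrixP => a b.
by apply: val_inj; have := eq_emb a b; rewrite !mxE.
Qed.

Lemma deg_moves w : is_vertex n r w -> deg n r w = #|moves (supp w)|.
Proof.
move=> vw; rewrite /deg.
have -> : [set u | is_vertex n r (emb n r u) && adj n (emb n r u) w] =
    (fun q => lift_mx (shift w q)) @: moves (supp w).
  apply/setP => u; rewrite inE; apply/andP/imsetP => [[_ /adjP [q mv uE]] | [q mv ->]].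
    by exists q => //; apply: emb_inj; rewrite emb_lift //; apply: shift_vertex.
  have sv := shift_vertex vw mv; rewrite emb_lift //.
  by split => //; apply/adjP; exists q.
rewrite card_in_imset // => -[x y] [x' y'] mv mv' /(congr1 (emb n r)).
rewrite !emb_lift; try exact: shift_vertex.
move=> /(congr1 (toZ n)); rewrite !toZ_shift // => /addrI.
move: mv mv'; rewrite !inE /= => /andP [_ /andP [lt ne]] /andP [_ /andP [lt' ne']].
by case/(swap_mx_inj lt ne lt' ne') => -> ->.
Qed.

Lemma twice_deg w : is_vertex n r w ->
  2 * (deg n r w)%:R = #|supp w|%:R ^+ 2 - \sum_a #|row_cells (supp w) a|%:R ^+ 2
                       - \sum_b #|col_cells (supp w) b|%:R ^+ 2 + #|supp w|%:R :> int.
Proof. by move=> vw; rewrite deg_moves // -card_cross_pairs card_cross_pairs_moves natrM. Qed.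

Lemma supp_row_le w a : is_vertex n r w -> (#|row_cells (supp w) a| <= r)%N.
Proof.
case/andP => /forallP /(_ a) /eqP <- _; rewrite card_row_cells.
by apply: leq_sum => b _; rewrite inE; case: (w a b).
Qed.

Definition zero_one w : Prop := forall a b, (0 < w a b)%N -> w a b = 1%N.

Lemma supp_row_zero_one w a : is_vertex n r w -> zero_one w ->
  #|row_cells (supp w) a| = r.
Proof.
case/andP => /forallP /(_ a) /eqP <- _ w01; rewrite card_row_cells.
by apply: eq_bigr => b _; rewrite inE /=; case: (posnP (w a b)) => [-> | /w01 ->].
Qed.

Lemma supp_col_zero_one w b : is_vertex n r w -> zero_one w ->
  #|col_cells (supp w) b| = r.
Proof.
case/andP => _ /forallP /(_ b) /eqP <- w01; rewrite card_col_cells.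
by apply: eq_bigr => a _; rewrite inE /=; case: (posnP (w a b)) => [-> | /w01 ->].
Qed.

Lemma deg_zero_one w : is_vertex n r w -> zero_one w ->
  2 * (deg n r w)%:R = (n * r)%:R * ((n * r)%:R - 2 * r%:R + 1) :> int.
Proof.
move=> vw w01.
have card_supp : #|supp w| = (n * r)%N.
  rewrite card_by_rows (eq_bigr _ (fun a _ => supp_row_zero_one a vw w01)).
  by rewrite sum_nat_const card_ord.
rewrite twice_deg // card_supp.
under eq_bigr do rewrite supp_row_zero_one //.
under [X in _ - X + _]eq_bigr do rewrite supp_col_zero_one //.
rewrite !sumr_const card_ord -mulr_natl natrM.
ring.
Qed.

Lemma deg_bound w : (2 <= n)%N -> is_vertex n r w ->
  2 * (deg n r w)%:R <= (n * r)%:R * ((n * r)%:R - 2 * r%:R + 1) :> int.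
Proof.
move=> n2 vw; rewrite twice_deg // natrM.
have rows := sqr_sum_le (fun a => #|row_cells (supp w) a|%:R : int).
have cols := sqr_sum_le (fun b => #|col_cells (supp w) b|%:R : int).
rewrite /= -natr_sum -card_by_rows card_ord in rows.
rewrite /= -natr_sum -card_by_cols card_ord in cols.
apply: cross_count_bound rows cols; rewrite ?ler_nat ?ler0n //.
rewrite -natrM ler_nat card_by_rows.
rewrite -[X in (_ <= X * _)%N]card_ord -sum_nat_const.
by apply: leq_sum => a _; apply: supp_row_le.
Qed.

End Degree.

Unset Implicit Arguments.
Local Close Scope ring_scope.

Theorem proposition2p3 (n r : nat) (hn : (1 <= n)%N) (hr : (1 <= r)%N)
  (v : 'M[nat]_n) (hv : is_vertex n r v)
  (h01 : forall i j : 'I_n, (0 < v i j)%N -> v i j = 1%N) :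
  maxdeg n r = deg n r v /\
  ((deg n r v)%:R : rat) =
    ((n * r)%:R * ((n * r)%:R - 2 * r%:R + 1) / 2)%R.
Proof.
have deg_v := deg_zero_one hv h01.
have deg_max w : is_vertex n r w -> (deg n r w <= deg n r v)%N.
  case: (leqP n 1) => [n1 | n2] vw.
    by rewrite deg_moves // moves_single_row ?cards0.
  have := deg_bound n2 vw; rewrite -deg_v.
  by move: (deg n r w) (deg n r v) => dw dv; rewrite !natz; lia.
split.
  apply/eqP; rewrite eqn_leq; apply/andP; split.
    by apply/bigmax_leqP => u; apply: deg_max.
  have := @leq_bigmax_cond _ (fun u : 'M['I_r.+1]_n => is_vertex n r (emb n r u))
    (fun u => deg n r (emb n r u)) (lift_mx r v).
  by rewrite (emb_lift hv); apply.
move: (deg n r v) deg_v => d /(congr1 (fun z : int => z%:~R : rat)).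
rewrite /= !(rmorphM, rmorphD, rmorphN, rmorph_nat, rmorph1).
lra.
Qed.
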